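(* Let $X$ be an $n$-dimensional real normed space. Suppose that $Y, X_0 \subseteq X$ are linear subspaces such that $Y_0 =X_0 \cap Y$ is non-empty and $\lambda(Y_0, Y)=1$. Then $\lambda(Y, X) \geq \lambda(Y_0, X_0)$.
   Context: For a linear subspace $V$ of a normed space $W$, a projection onto $V$ is a linear $P:W\to V$ with $P|_V=\mathrm{id}_V$, and $\lambda(V,W)$ is the infimum of the operator norms of such projections. *)

(* X is modelled as 'rV[R]_n with an arbitrary norm N.
   Every n-dimensional real normed space is isometric to such a space. *)
From mathcomp Require Import all_boot all_order all_algebra.
From mathcomp Require Import classical_sets reals.
Set Implicit Arguments. Unset Strict Implicit. Unset Printing Implicit Defensive.
Import Order.TTheory GRing.Theory Num.Theory.
Local Open Scope ring_scope.
Local Open Scope classical_set_scope.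

Definition is_norm (R : realType) (n : nat) (N : 'rV[R]_n -> R) : Prop :=
  [/\ (forall x, 0 <= N x),
      (forall x, N x = 0 -> x = 0),
      (forall (a : R) x, N (a *: x) = `|a| * N x)
    & (forall x y, N (x + y) <= N x + N y)].

(* Subspaces of 'rV_n are represented by square matrices (their row space).
   A linear map W -> 'rV_n is represented by a matrix A acting by w |-> w *m A. *)
Definition is_projection (R : realType) (n : nat) (V W A : 'M[R]_n) : Prop :=
  (W *m A <= V)%MS /\ (forall v : 'rV[R]_n, (v <= V)%MS -> v *m A = v).

Definition opnorm (R : realType) (n : nat) (N : 'rV[R]_n -> R) (W A : 'M[R]_n) : R :=
  sup [set N (w *m A) | w in [set w : 'rV[R]_n | (w <= W)%MS /\ N w <= 1]].

Definition proj_const (R : realType) (n : nat) (N : 'rV[R]_n -> R) (V W : 'M[R]_n) : R :=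
  inf [set opnorm N W A | A in [set A : 'M[R]_n | is_projection V W A]].

(* A projection P of X onto Y followed by a near-optimal projection Q of Y onto
   Y0 = X0 :&: Y restricts to a projection of X0 onto Y0 of norm at most
   |Q| |P|.  Taking infima gives lambda(Y0, X0) <= lambda(Y0, Y) lambda(Y, X),
   so lambda(Y0, Y) = 1 yields the claim.  The only analytic input is that the
   operator norms involved are finite, i.e. that every norm on 'rV_n is
   equivalent to the sup norm, which follows from compactness of the unit
   sphere. *)
From mathcomp Require Import all_boot all_order all_algebra.
From mathcomp Require Import classical_sets reals topology normedtype derive.
From mathcomp Require Import lra.
Set Implicit Arguments.
Unset Strict Implicit.
Unset Printing Implicit Defensive.
Import Order.TTheory GRing.Theory Num.Theory.
Import numFieldNormedType.Exports.
Local Open Scope classical_set_scope.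
Local Open Scope ring_scope.

Lemma le_inf_mulr (R : realType) (S : set R) (a c : R) :
  S !=set0 -> 0 <= c -> (forall x, S x -> a <= x * c) -> a <= inf S * c.
Proof.
move=> [x Sx]; rewrite le_eqVlt => /predU1P[<- aS|c0 aS].
  by rewrite mulr0; have := aS x Sx; rewrite mulr0.
rewrite -ler_pdivrMr //; apply: lb_le_inf; first by exists x.
by move=> y Sy; rewrite ler_pdivrMr // aS.
Qed.

Section SeminormBound.
Variables (R : realType) (n : nat).

Lemma normr_rV_coord (x : 'rV[R]_n) i : `|x 0 i| <= `|x|.
Proof.
rewrite (_ : `|x| = mx_norm x) // mx_normrE.
exact: (le_bigmax _ (fun ij : 'I_1 * 'I_n => `|x ij.1 ij.2|) (ord0, i)).
Qed.

Lemma seminorm_le_normr (M : 'rV[R]_n -> R) :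
  (forall x, 0 <= M x) ->
  (forall (a : R) x, M (a *: x) = `|a| * M x) ->
  (forall x y, M (x + y) <= M x + M y) ->
  forall x, M x <= (\sum_(j < n) M (delta_mx 0 j)) * `|x|.
Proof.
move=> M_ge0 MZ MD x.
have M0 : M 0 = 0 by rewrite -(scale0r 0) MZ normr0 mul0r.
rewrite {1}(row_sum_delta x) mulr_suml.
elim/big_rec2: _ => [|j y z _ Myz]; first by rewrite M0.
apply: le_trans (MD _ _) _; rewrite mulrC; apply: lerD => //.
by rewrite MZ ler_wpM2r // normr_rV_coord.
Qed.

End SeminormBound.

Section Projections.
Variables (R : realType) (n : nat).
Implicit Types (U V S W P Q : 'M[R]_n).

Lemma proj_mx_is_projection V W : is_projection V W (proj_mx V V^C%MS).
Proof.
split; first exact: proj_mx_sub.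
by move=> v vV; rewrite proj_mx_id // capmx_compl.
Qed.

Lemma is_projection_mulmx U V S W P Q : (S <= V)%MS -> (W <= U)%MS ->
  is_projection V U P -> is_projection S V Q -> is_projection S W (P *m Q).
Proof.
move=> SV WU [UP_V P_id] [VQ_S Q_id]; split.
  by rewrite mulmxA; apply: submx_trans VQ_S; apply/submxMr/submx_trans/UP_V/submxMr.
by move=> v vS; rewrite mulmxA P_id ?Q_id // (submx_trans vS).
Qed.

End Projections.

Section OperatorNorm.
Variables (R : realType) (n : nat) (N : 'rV[R]_n -> R).
Hypothesis hN : is_norm N.

Let N_ge0 x : 0 <= N x. Proof. by case: hN. Qed.
Let N_eq0 x : N x = 0 -> x = 0. Proof. by case: hN => _ /(_ x). Qed.
Let NZ (a : R) x : N (a *: x) = `|a| * N x. Proof. by case: hN. Qed.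
Let ND x y : N (x + y) <= N x + N y. Proof. by case: hN. Qed.

Let N_gt0 x : x != 0 -> 0 < N x.
Proof. by move=> x0; rewrite lt_def N_ge0 andbT; apply: contra_neq x0 => /N_eq0. Qed.

Let NB x y : N (x - y) = N (y - x).
Proof. by rewrite -opprB -scaleN1r NZ normrN normr1 mul1r. Qed.

Let N0 : N 0 = 0. Proof. by rewrite -(scale0r 0) NZ normr0 mul0r. Qed.

Let N_normalize x : x != 0 -> N ((N x)^-1 *: x) = 1.
Proof. by move=> x0; rewrite NZ ger0_norm ?invr_ge0 // mulVf // gt_eqF ?N_gt0. Qed.

Lemma is_norm_dist_le x y :
  `|N x - N y| <= (\sum_(j < n) N (delta_mx 0 j)) * `|x - y|.
Proof.
apply: le_trans (seminorm_le_normr N_ge0 NZ ND (x - y)).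
rewrite ler_norml; apply/andP; split.
  by have := ND (y - x) x; rewrite subrK -NB; lra.
by have := ND (x - y) y; rewrite subrK; lra.
Qed.

Lemma is_norm_continuous : continuous N.
Proof.
move=> x; apply/(@cvgrPdist_lt _ _ _ (nbhs x) (nbhs_filter x)) => e e0.
set K := \sum_(j < n) N (delta_mx 0 j).
have K1 : 0 < K + 1 by rewrite ltr_wpDl // sumr_ge0.
near=> y.
apply: le_lt_trans (is_norm_dist_le _ _) _.
apply: (@le_lt_trans _ _ ((K + 1) * `|x - y|)); first by rewrite ler_wpM2r // lerDl.
rewrite -ltr_pdivlMl //; near: y.
by apply: (@cvgr_dist_lt _ _ _ (nbhs x) _ id x cvg_id); rewrite mulr_gt0 // invr_gt0.
Unshelve. all: by end_near. Qed.

(* The minimum of N on the sup-norm unit sphere bounds N from below. *)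
Lemma normr_le_is_norm : exists2 c, 0 < c & forall x, `|x| <= c * N x.
Proof.
pose S := [set x : 'rV[R]_n | `|x| = 1].
have normalized x : x != 0 -> S (`|x|^-1 *: x).
  by move=> x0; rewrite /S /= normrZ normrV ?unitfE ?normr_eq0 // normr_id mulVf // normr_eq0.
have [S0|/set0P[s Ss]] := eqVneq S set0.
  exists 1 => // x; have [->|x0] := eqVneq x 0; first by rewrite normr0 mul1r.
  by have := normalized x x0; rewrite S0.
have S_compact : compact S.
  apply: bounded_closed_compact.
    rewrite /bounded_set /bounded_near; near=> M => x /= ->.
    by near: M; exact: nbhs_pinfty_ge.
  rewrite (_ : S = (fun x : 'rV[R]_n => `|x|) @^-1` [set 1]) //.
  by apply: preimage_closed => [x _|]; [exact: norm_continuous | exact: closed_eq].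
have [c Sc c_min] : exists2 c, c \in S & forall t, t \in S -> N c <= N t.
  apply: EVT_min_rV => //; first by exists s.
  by apply: continuous_subspaceT => z; exact: is_norm_continuous.
have c0 : c != 0.
  by apply: contraPneq Sc => ->; rewrite inE /S /= normr0 => /eqP; rewrite eq_sym oner_eq0.
exists (N c)^-1 => [|x]; first by rewrite invr_gt0 N_gt0.
have [->|x0] := eqVneq x 0; first by rewrite normr0 mulr_ge0 ?invr_ge0.
have := c_min _ (mem_set (normalized x x0)).
rewrite NZ normrV ?unitfE ?normr_eq0 // normr_id.
by rewrite ler_pdivlMl ?normr_gt0 // ler_pdivlMl ?N_gt0 // mulrC.
Unshelve. all: by end_near. Qed.

Lemma mulmx_is_norm_bounded (A : 'M[R]_n) :
  exists2 B, 0 <= B & forall w, N (w *m A) <= B * N w.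
Proof.
have [c c0 hc] := normr_le_is_norm.
set KA := \sum_(j < n) N (delta_mx 0 j *m A).
exists (KA * c) => [|w]; first by apply: mulr_ge0 (ltW c0); apply: sumr_ge0.
have NAZ a x : N ((a *: x) *m A) = `|a| * N (x *m A) by rewrite -scalemxAl NZ.
have NAD x y : N ((x + y) *m A) <= N (x *m A) + N (y *m A) by rewrite mulmxDl ND.
apply: le_trans (seminorm_le_normr (fun x => N_ge0 _) NAZ NAD w) _.
by rewrite -mulrA ler_wpM2l //; apply: sumr_ge0.
Qed.

Let unit_ball_image (W A : 'M[R]_n) : set R :=
  [set N (w *m A) | w in [set w : 'rV[R]_n | (w <= W)%MS /\ N w <= 1]].

Let unit_ball_image0 W A : unit_ball_image W A 0.
Proof. by exists 0; rewrite ?mul0mx //; split; [exact: sub0mx | rewrite N0]. Qed.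

Let unit_ball_image_has_sup W A : has_sup (unit_ball_image W A).
Proof.
split; first by exists 0.
have [B B0 hB] := mulmx_is_norm_bounded A.
exists B => _ [w [_ Nw1] <-].
by apply: le_trans (hB w) _; rewrite -[leRHS]mulr1 ler_wpM2l.
Qed.

Lemma opnorm_ge0 W A : 0 <= opnorm N W A.
Proof. exact: (sup_upper_bound (unit_ball_image_has_sup W A) (unit_ball_image0 W A)). Qed.

Lemma mulmx_opnorm_le W A w : (w <= W)%MS -> N (w *m A) <= opnorm N W A * N w.
Proof.
move=> wW; have [->|w0] := eqVneq w 0; first by rewrite mul0mx N0 mulr0.
have : unit_ball_image W A (N (((N w)^-1 *: w) *m A)).
  by exists ((N w)^-1 *: w) => //; split; [exact: scalemx_sub | rewrite N_normalize].
move/(sup_upper_bound (unit_ball_image_has_sup W A)).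
by rewrite -scalemxAl NZ ger0_norm ?invr_ge0 // ler_pdivrMl ?N_gt0 // mulrC.
Qed.

Lemma opnorm_le W A b : 0 <= b ->
  (forall w, (w <= W)%MS -> N (w *m A) <= b * N w) -> opnorm N W A <= b.
Proof.
move=> b0 hb; apply: ge_sup; first by exists 0; exact: unit_ball_image0.
move=> _ [w [wW Nw1] <-]; apply: le_trans (hb w wW) _.
by rewrite -[leRHS]mulr1 ler_wpM2l.
Qed.

Lemma opnorm_submx W1 W2 A : (W1 <= W2)%MS -> opnorm N W1 A <= opnorm N W2 A.
Proof.
move=> W12; apply: opnorm_le; first exact: opnorm_ge0.
by move=> w wW1; apply: mulmx_opnorm_le (submx_trans wW1 W12).
Qed.

Lemma opnorm_mulmx_le U W P Q : (W *m P <= U)%MS ->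
  opnorm N W (P *m Q) <= opnorm N U Q * opnorm N W P.
Proof.
move=> WPU; apply: opnorm_le => [|w wW]; first by rewrite mulr_ge0 ?opnorm_ge0.
rewrite mulmxA; apply: le_trans (mulmx_opnorm_le Q (submx_trans (submxMr P wW) WPU)) _.
by rewrite -mulrA ler_wpM2l ?opnorm_ge0 ?mulmx_opnorm_le.
Qed.

Let projection_norms (V W : 'M[R]_n) : set R :=
  [set opnorm N W A | A in [set A | is_projection V W A]].

Let projection_norms_neq0 V W : projection_norms V W !=set0.
Proof.
by exists (opnorm N W (proj_mx V V^C%MS)), (proj_mx V V^C%MS);
  first exact: proj_mx_is_projection.
Qed.

Lemma proj_const_le V W A : is_projection V W A -> proj_const N V W <= opnorm N W A.
Proof.
move=> hA; apply: ge_inf; last by exists A.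
by exists 0 => _ [B _ <-]; exact: opnorm_ge0.
Qed.

Lemma proj_const_ge0 V W : 0 <= proj_const N V W.
Proof.
apply: lb_le_inf; first exact: projection_norms_neq0.
by move=> _ [A _ <-]; exact: opnorm_ge0.
Qed.

Lemma proj_const_le_opnorm U V S W P : (S <= V)%MS -> (W <= U)%MS ->
  is_projection V U P -> proj_const N S W <= proj_const N S V * opnorm N U P.
Proof.
move=> SV WU hP; apply: le_inf_mulr; [exact: projection_norms_neq0 | exact: opnorm_ge0 |].
move=> _ [Q hQ <-]; apply: le_trans (proj_const_le (is_projection_mulmx SV WU hP hQ)) _.
apply: le_trans (opnorm_mulmx_le Q (submx_trans (submxMr P WU) hP.1)) _.
by rewrite ler_wpM2l ?opnorm_ge0 ?opnorm_submx.
Qed.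

Lemma proj_const_mul_le U V S W : (S <= V)%MS -> (W <= U)%MS ->
  proj_const N S W <= proj_const N S V * proj_const N V U.
Proof.
move=> SV WU; rewrite mulrC.
apply: le_inf_mulr; [exact: projection_norms_neq0 | exact: proj_const_ge0 |].
by move=> _ [P hP <-]; rewrite mulrC; exact: proj_const_le_opnorm.
Qed.

End OperatorNorm.

Theorem mainTheorem14 (R : realType) (n : nat) (N : 'rV[R]_n -> R)
  (Y X0 : 'M[R]_n) :
  is_norm N ->
  (exists y0 : 'rV[R]_n, (y0 <= (X0 :&: Y))%MS) ->
  proj_const N (X0 :&: Y)%MS Y = 1 ->
  proj_const N (X0 :&: Y)%MS X0 <= proj_const N Y 1%:M.
Proof.
(* Y0 always contains 0, so the non-emptiness hypothesis carries no content. *)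
move=> hN _ lambda_Y0_Y.
have := proj_const_mul_le hN (capmxSr X0 Y) (submx1 X0).
by rewrite lambda_Y0_Y mul1r.
Qed.
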